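(* Let $q\ge 2$, let $\mathcal{X}=\mathcal{Y}=\{0,\ldots,q-1\}$, and let $G$ be an error graph for a discrete memoryless channel with input alphabet $\mathcal{X}$ and output alphabet $\mathcal{Y}$. Let $n=n_1+n_2$ with $n_1,n_2$ nonnegative integers, and let $H=(U\sqcup V,E)$ be the bipartite graph whose parts $U$ and $V$ are both copies of $\mathcal{X}^{n_1}$ (input and output sequences of length $n_1$), where $u\in U$ and $v\in V$ are adjacent if and only if $v\neq u$ and $v$ can be obtained from $u$ by a single error. Then a single-error-correcting transmission strategy of length $n$ with one-time feedback after the first $n_1$ symbols that transmits $$M=\sum_{u\in U}M(u)$$ messages exists if and only if there exists a family of nonadaptive single-error-correcting codes $\mathcal{C}(u)$, $u\in \mathcal{X}^{n_1}$, of length $n_2$, where $\mathcal{C}(u)$ has cardinality $M(u)$ and $F(u)$ free points, satisfying $$\sum_{u:\,(u,v)\in E}M(u)\le F(v)\quad\text{for every } v\in V.$$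
   Context: Error graph: a bipartite graph $G$ whose left part is $\mathcal{X}$ and right part is $\mathcal{Y}$; for $q_1\neq q_2$, $q_1$ and $q_2$ are joined if an error may change transmitted symbol $q_1$ into received symbol $q_2$. An error in a transmitted sequence means replacing one symbol $q_1$ by a symbol $q_2$ with $(q_1,q_2)$ an edge of $G$; ''a single error'' means at most one such replacement occurs in the whole transmission. A transmission strategy with one-time feedback after $n_1$ symbols for messages $m\in[M]$: the first $n_1$ transmitted symbols are a function of $m$ only; after they are sent, the encoder learns (error-free, instantaneously) the $n_1$ received symbols, and the remaining $n_2$ transmitted symbols are a function of $m$ and of those received symbols. For a message $m$, its cloud $B(m)$ is the set of output sequences in $\mathcal{Y}^n$ that can be received when $m$ is sent and at most one error occurs; the strategy is single-error-correcting (transmits $M$ messages) if the clouds $B(m)$, $m\in[M]$, are pairwise disjoint. A nonadaptive code of length $n_2$ is a strategy without feedback (each message is mapped to a fixed codeword in $\mathcal{X}^{n_2}$); it is single-error-correcting if its clouds are pairwise disjoint, and its free points are the points of $\mathcal{Y}^{n_2}$ lying in no cloud; $F(u)$ denotes their number for $\mathcal{C}(u)$. *)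

From mathcomp Require Import all_boot.
Set Implicit Arguments. Unset Strict Implicit. Unset Printing Implicit Defensive.

Definition word (q n : nat) := {ffun 'I_n -> 'I_q}.

Definition catw (q n1 n2 : nat) (u : word q n1) (w : word q n2) : word q (n1 + n2) :=
  [ffun i => match split i with inl j => u j | inr k => w k end].

Definition one_err (q n : nat) (G : rel 'I_q) (x y : word q n) : bool :=
  [exists i, [forall j, (j != i) ==> (y j == x j)] && G (x i) (y i)].

Definition le1_err (q n : nat) (G : rel 'I_q) (x y : word q n) : bool :=
  (x == y) || one_err G x y.

(* Cloud of message m for a feedback strategy (enc1, enc2): the received
   word is catw y1 y2; the encoder learns y1 and sends catw (enc1 m) (enc2 m y1). *)
Definition fb_cloud (q n1 n2 M : nat) (G : rel 'I_q)
  (enc1 : 'I_M -> word q n1) (enc2 : 'I_M -> word q n1 -> word q n2)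
  (m : 'I_M) (y : word q (n1 + n2)) : Prop :=
  exists (y1 : word q n1) (y2 : word q n2),
    y = catw y1 y2 /\ le1_err G (catw (enc1 m) (enc2 m y1)) (catw y1 y2).

Definition fb_SEC (q n1 n2 M : nat) (G : rel 'I_q)
  (enc1 : 'I_M -> word q n1) (enc2 : 'I_M -> word q n1 -> word q n2) : Prop :=
  forall m m' : 'I_M, m != m' -> forall y,
    ~ (fb_cloud G enc1 enc2 m y /\ fb_cloud G enc1 enc2 m' y).

Definition code_SEC (q n K : nat) (G : rel 'I_q) (c : 'I_K -> word q n) : Prop :=
  forall k k' : 'I_K, k != k' -> forall y : word q n,
    ~~ (le1_err G (c k) y && le1_err G (c k') y).

Definition free_points (q n K : nat) (G : rel 'I_q) (c : 'I_K -> word q n) : nat :=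
  #|[set y : word q n | [forall k, ~~ le1_err G (c k) y]]|.

Definition adjH (q n1 : nat) (G : rel 'I_q) (u v : word q n1) : bool :=
  (v != u) && one_err G u v.

From mathcomp Require Import all_boot.
Set Implicit Arguments. Unset Strict Implicit. Unset Printing Implicit Defensive.

(* Sort the messages by their first block u.  Those messages whose first block
   arrives intact continue with the codeword they would send after u, and these
   continuations form a single-error-correcting code C(u).  A message whose
   first block u was corrupted into some v <> u has spent its error, so its
   second block arrives exactly; since the receiver sees v, these second blocks
   must be distinct free points of C(v).  Conversely, codes C(u) together with
   injections of the messages adjacent to v into the free points of C(v)
   assemble into a strategy. *)

Lemma card_preim_sum (aT rT : finType) (f : aT -> rT) (P : pred rT) :
  #|[set x | P (f x)]| = \sum_(y | P y) #|[set x | f x == y]|.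
Proof.
rewrite -sum1_card (partition_big f P) => [|x]; last by rewrite inE.
apply: eq_bigr => y Py; rewrite -sum1_card; apply: eq_bigl => x.
by rewrite !inE; case: (f x =P y) => [->|]; rewrite ?Py ?andbF.
Qed.

Lemma card_tag_fiber (I : finType) (T_ : I -> finType) (i : I) :
  #|[set t : {i : I & T_ i} | tag t == i]| = #|T_ i|.
Proof.
have -> : [set t : {i : I & T_ i} | tag t == i] = [set Tagged T_ x | x : T_ i].
  apply/setP => -[j x]; rewrite !inE /=.
  apply/idP/imsetP => [/eqP ji | [y _ /(congr1 tag) /= ->] //].
  by subst j; exists x.
by rewrite card_imset //; apply: eq_from_Tagged.
Qed.

Section SetEmbedding.
Variables (aT rT : finType) (y0 : rT) (A : {set aT}) (B : {set rT}).
Hypothesis leAB : #|A| <= #|B|.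

(* The [k]-th element of [A] goes to the [k]-th element of [B]; [y0] is
   only a junk value, taken outside [A]. *)
Definition set_embed (x : aT) : rT := nth y0 (enum B) (index x (enum A)).

Lemma set_embed_index_lt x : x \in A -> index x (enum A) < size (enum B).
Proof. by move=> Ax; rewrite -cardE (leq_trans _ leAB) // cardE index_mem mem_enum. Qed.

Lemma set_embed_in x : x \in A -> set_embed x \in B.
Proof. by move=> Ax; rewrite -mem_enum mem_nth ?set_embed_index_lt. Qed.

Lemma set_embed_inj : {in A &, injective set_embed}.
Proof.
move=> x x' Ax Ax' /eqP; rewrite nth_uniq ?enum_uniq ?set_embed_index_lt //.
move=> /eqP eq_index.
have [xA x'A] : x \in enum A /\ x' \in enum A by rewrite !mem_enum.
by rewrite -(nth_index x xA) eq_index nth_index.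
Qed.

End SetEmbedding.

Section Concatenation.
Variables (q n1 n2 : nat) (G : rel 'I_q).
Implicit Types (a c : word q n1) (b d : word q n2).

Lemma catwL a b j : catw a b (lshift n2 j) = a j.
Proof. by rewrite ffunE (unsplitK (inl _ j)). Qed.

Lemma catwR a b k : catw a b (rshift n1 k) = b k.
Proof. by rewrite ffunE (unsplitK (inr _ k)). Qed.

Lemma catw_inj a b c d : catw a b = catw c d -> a = c /\ b = d.
Proof.
move=> eq_cat; split; apply/ffunP => i.
  by rewrite -(catwL a b) eq_cat catwL.
by rewrite -(catwR a b) eq_cat catwR.
Qed.

Lemma one_err_catwl a c b : one_err G a c -> one_err G (catw a b) (catw c b).
Proof.
case/existsP=> j /andP [/forallP eq_off Gj]; apply/existsP; exists (lshift n2 j).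
rewrite !catwL Gj andbT; apply/forallP => i.
by case: (split_ordP i) => [j' ->|k ->]; rewrite ?catwL ?catwR ?eq_lshift ?eqxx ?implybT.
Qed.

Lemma one_err_catwr a b d : one_err G b d -> one_err G (catw a b) (catw a d).
Proof.
case/existsP=> k /andP [/forallP eq_off Gk]; apply/existsP; exists (rshift n1 k).
rewrite !catwR Gk andbT; apply/forallP => i.
by case: (split_ordP i) => [j ->|k' ->]; rewrite ?catwL ?catwR ?eq_rshift ?eqxx ?implybT.
Qed.

Lemma one_err_catwP a b c d :
  one_err G (catw a b) (catw c d) ->
  (a = c /\ one_err G b d) \/ (one_err G a c /\ b = d).
Proof.
case/existsP=> i /andP [/forallP eq_off].
case: (split_ordP i) eq_off => [j ->|k ->] eq_off; rewrite ?catwL ?catwR => Gi.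
- right; split; last first.
    by apply/ffunP => k; have := eq_off (rshift n1 k); rewrite eq_rlshift !catwR => /eqP.
  apply/existsP; exists j; rewrite Gi andbT; apply/forallP => j'.
  by have := eq_off (lshift n2 j'); rewrite eq_lshift !catwL.
- left; split.
    by apply/ffunP => j; have := eq_off (lshift n2 j); rewrite eq_lrshift !catwL => /eqP.
  apply/existsP; exists k; rewrite Gi andbT; apply/forallP => k'.
  by have := eq_off (rshift n1 k'); rewrite eq_rshift !catwR.
Qed.

Lemma le1_err_catw a b c d :
  le1_err G (catw a b) (catw c d) <->
  (a = c /\ le1_err G b d) \/ (one_err G a c /\ b = d).
Proof.
rewrite /le1_err; split.
  case/orP => [/eqP/catw_inj [-> ->]|/one_err_catwP [[-> ->]|]]; last by right.
    by left; rewrite eqxx.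
  by left; rewrite orbT.
case=> [[<- /orP [/eqP <-|bd]]|[ac <-]]; first by rewrite eqxx.
  by rewrite one_err_catwr ?orbT.
by rewrite one_err_catwl ?orbT.
Qed.

Hypothesis G_irrefl : forall x, ~~ G x x.

Lemma one_err_neq n (x y : word q n) : one_err G x y -> x != y.
Proof.
case/existsP=> i /andP [_ Gi]; apply: contraTneq Gi => ->; exact: G_irrefl.
Qed.

End Concatenation.

Section FeedbackToCodes.
Variables (q n1 n2 M : nat) (G : rel 'I_q).
Variables (enc1 : 'I_M -> word q n1) (enc2 : 'I_M -> word q n1 -> word q n2).

Lemma fb_cloud_clean_prefix m y :
  le1_err G (enc2 m (enc1 m)) y -> fb_cloud G enc1 enc2 m (catw (enc1 m) y).
Proof. by move=> err_y; exists (enc1 m), y; split=> //; apply/le1_err_catw; left. Qed.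

Lemma fb_cloud_noisy_prefix m v :
  one_err G (enc1 m) v -> fb_cloud G enc1 enc2 m (catw v (enc2 m v)).
Proof. by move=> err_v; exists v, (enc2 m v); split=> //; apply/le1_err_catw; right. Qed.

Definition fb_size (u : word q n1) := #|[set m | enc1 m == u]|.

Definition fb_code (u : word q n1) (k : 'I_(fb_size u)) := enc2 (enum_val k) u.

Lemma enc1_enum_val u (k : 'I_(fb_size u)) : enc1 (enum_val k) = u.
Proof. by apply/eqP; have := enum_valP k; rewrite inE. Qed.

Lemma fb_cloud_fb_code u (k : 'I_(fb_size u)) y :
  le1_err G (fb_code k) y -> fb_cloud G enc1 enc2 (enum_val k) (catw u y).
Proof. by have := @fb_cloud_clean_prefix (enum_val k) y; rewrite enc1_enum_val. Qed.

Lemma sum_fb_size (P : pred (word q n1)) :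
  \sum_(u | P u) fb_size u = #|[set m | P (enc1 m)]|.
Proof. by rewrite card_preim_sum. Qed.

Hypothesis enc_SEC : fb_SEC G enc1 enc2.

Lemma fb_code_SEC u : code_SEC G (@fb_code u).
Proof.
move=> k k' neq_k y; apply/negP => /andP [err_k err_k'].
apply: (enc_SEC (y := catw u y) (_ : enum_val k != enum_val k')).
  by apply: contra neq_k => /eqP/enum_val_inj ->.
by split; apply: fb_cloud_fb_code.
Qed.

(* A message whose first block was corrupted into [v] may be received as
   [catw v (enc2 m v)], so these second blocks are pairwise distinct and
   avoid the clouds of all messages that sent [v] itself. *)
Lemma fb_size_adj_le_free v :
  \sum_(u | adjH G u v) fb_size u <= free_points G (@fb_code v).
Proof.
rewrite sum_fb_size /free_points -(@card_in_imset _ _ (enc2^~ v)); last first.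
  move=> m m'; rewrite !inE => /andP [_ err_m] /andP [_ err_m'] eq_enc2.
  case: (eqVneq m m') => // neq_m; exfalso.
  apply: (enc_SEC (y := catw v (enc2 m v)) neq_m).
  by split; [|rewrite eq_enc2]; apply: fb_cloud_noisy_prefix.
apply/subset_leq_card/subsetP => y /imsetP [m]; rewrite inE => /andP [neq_v err_v] ->.
rewrite inE; apply/forallP => k; apply/negP => err_k.
have neq_m : m != enum_val k.
  by apply: contraNneq neq_v => ->; rewrite enc1_enum_val.
apply: (enc_SEC (y := catw v (enc2 m v)) neq_m); split; first exact: fb_cloud_noisy_prefix.
exact: fb_cloud_fb_code.
Qed.

End FeedbackToCodes.

Section CodesToFeedback.
Variables (q n1 n2 : nat) (G : rel 'I_q).
Hypothesis G_irrefl : forall x, ~~ G x x.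
Hypothesis q_gt0 : 0 < q.
Variables (Mu : word q n1 -> nat) (C : forall u : word q n1, 'I_(Mu u) -> word q n2).
Arguments C : clear implicits.
Hypothesis C_SEC : forall u, code_SEC G (C u).
Hypothesis Mu_adj_le_free :
  forall v, \sum_(u | adjH G u v) Mu u <= free_points G (C v).

Local Notation msg := {u : word q n1 & 'I_(Mu u)}.

Lemma card_msg_tag (P : pred (word q n1)) :
  #|[set t : msg | P (tag t)]| = \sum_(u | P u) Mu u.
Proof.
by rewrite card_preim_sum; apply: eq_bigr => u _; rewrite card_tag_fiber card_ord.
Qed.

Variables (M : nat) (M_sum : M = \sum_u Mu u).

Lemma card_msg : M = #|{: msg}|.
Proof. by rewrite M_sum -card_msg_tag cardsT. Qed.

Definition decode (m : 'I_M) : msg := enum_val (cast_ord card_msg m).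

Lemma decode_inj : injective decode.
Proof. by move=> m m' /enum_val_inj /cast_ord_inj. Qed.

Definition strat_enc1 (m : 'I_M) := tag (decode m).

Definition own_codeword (m : 'I_M) := C (strat_enc1 m) (tagged (decode m)).

Definition adj_msgs (v : word q n1) := [set m | adjH G (strat_enc1 m) v].

Definition free_set (v : word q n1) :=
  [set y : word q n2 | [forall k, ~~ le1_err G (C v k) y]].

Lemma card_adj_msgs_le v : #|adj_msgs v| <= #|free_set v|.
Proof.
apply: leq_trans (Mu_adj_le_free v); rewrite -card_msg_tag -(card_imset _ decode_inj).
by apply/subset_leq_card/subsetP => t /imsetP [m]; rewrite !inE => adj_m ->.
Qed.

Definition word0 : word q n2 := [ffun => Ordinal q_gt0].

Definition redirect (v : word q n1) : 'I_M -> word q n2 :=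
  set_embed word0 (adj_msgs v) (free_set v).

Lemma redirect_in v m : m \in adj_msgs v -> redirect v m \in free_set v.
Proof. exact: (set_embed_in word0 (card_adj_msgs_le v)). Qed.

Lemma redirect_inj v : {in adj_msgs v &, injective (redirect v)}.
Proof. exact: (set_embed_inj (card_adj_msgs_le v)). Qed.

Definition strat_enc2 (m : 'I_M) (y1 : word q n1) :=
  if y1 == strat_enc1 m then own_codeword m else redirect y1 m.

Lemma fb_cloud_catwP m y1 y2 :
  fb_cloud G strat_enc1 strat_enc2 m (catw y1 y2) ->
  (strat_enc1 m = y1 /\ le1_err G (own_codeword m) y2) \/
  (m \in adj_msgs y1 /\ redirect y1 m = y2).
Proof.
case=> z1 [z2 [/catw_inj [<- <-]]] /le1_err_catw [[eq_y1 err_y2]|[err_y1 <-]].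
  by left; move: err_y2; rewrite /strat_enc2 eq_y1 eqxx.
have neq_y1 : y1 != strat_enc1 m by rewrite eq_sym; apply: one_err_neq err_y1.
by right; rewrite /strat_enc2 (negbTE neq_y1) inE /adjH neq_y1 err_y1.
Qed.

Lemma own_codeword_SEC m m' y :
  m != m' -> strat_enc1 m = strat_enc1 m' ->
  ~~ (le1_err G (own_codeword m) y && le1_err G (own_codeword m') y).
Proof.
rewrite /own_codeword /strat_enc1 -(inj_eq decode_inj).
case: (decode m) => u k; case: (decode m') => u' k' /= neq_tagged eq_u; subst u'.
by apply: C_SEC; apply: contra neq_tagged => /eqP ->.
Qed.

Lemma strat_SEC : fb_SEC G strat_enc1 strat_enc2.
Proof.
move=> m m' neq_m y [cloud_m cloud_m'].
have [y1 [y2 [eq_y _]]] := cloud_m; subst y.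
case: (fb_cloud_catwP cloud_m) (fb_cloud_catwP cloud_m') =>
  [[eq_m err_m]|[adj_m red_m]] [[eq_m' err_m']|[adj_m' red_m']].
- by move: (own_codeword_SEC y2 neq_m); rewrite eq_m eq_m' err_m err_m' => /(_ erefl).
- have := redirect_in adj_m'.
  rewrite red_m' inE -eq_m => /forallP /(_ (tagged (decode m))).
  by rewrite err_m.
- have := redirect_in adj_m.
  rewrite red_m inE -eq_m' => /forallP /(_ (tagged (decode m'))).
  by rewrite err_m'.
- move/negP: neq_m; apply; apply/eqP.
  by apply: (redirect_inj adj_m adj_m'); rewrite red_m red_m'.
Qed.

End CodesToFeedback.

Unset Implicit Arguments.

Theorem theorem1 (q : nat) (hq : 2 <= q) (G : rel 'I_q)
  (hG : forall a, ~~ G a a) (n1 n2 M : nat) :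
  (exists (enc1 : 'I_M -> word q n1) (enc2 : 'I_M -> word q n1 -> word q n2),
      fb_SEC G enc1 enc2)
  <->
  (exists (Mu : word q n1 -> nat) (C : forall u : word q n1, 'I_(Mu u) -> word q n2),
      M = \sum_(u : word q n1) Mu u /\
      (forall u, code_SEC G (C u)) /\
      (forall v : word q n1,
          \sum_(u : word q n1 | adjH G u v) Mu u <= free_points G (C v))).
Proof.
split=> [[enc1 [enc2 enc_SEC]] | [Mu [C [M_sum [C_SEC Mu_adj_le_free]]]]].
  exists (fb_size enc1), (fb_code enc2).
  split; first by rewrite sum_fb_size cardsT card_ord.
  by split=> [u|v]; [apply: fb_code_SEC | apply: fb_size_adj_le_free].
have q_gt0 : 0 < q by apply: leq_trans hq.
exists (strat_enc1 M_sum), (strat_enc2 G q_gt0 C M_sum).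
exact: (strat_SEC hG C_SEC Mu_adj_le_free).
Qed.
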